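(* Let $\mathbf{F}$ be a Baire foliage tree on a topological space $X$ and let $p\in X$. Then: (a) $\mathbf{F}$ is nonincreasing, $\mathrm{flesh}\,\mathbf{F}=\mathbf{F}_{0_{\mathbf{F}}}$, and the height of $\mathbf{F}$ is $\omega$; (b) for every node $v$ of $\mathbf{F}$, the leaf $\mathbf{F}_v$ is closed-and-open in $X$ and $|\mathbf{F}_v|=2^{\omega}$; (c) $\mathrm{scope}_{\mathbf{F}}(p)$ is a branch in $\mathbf{F}$; (d) for every $n\in\omega$ there is exactly one $v\in\mathrm{scope}_{\mathbf{F}}(p)$ with $\mathrm{height}_{\mathbf{F}}(v)=n$.
   Context: $\omega=\{0,1,2,\dots\}$, ${}^{<\omega}\omega$ is the set of finite sequences of natural numbers. A tree is a strict partial order $(T,<)$ in which the set of predecessors of every node is well-ordered; $\mathrm{height}_T(x)$ is the ordinal isomorphic to the set of predecessors of $x$; the height of $T$ is the least ordinal $\beta$ such that no node has height $\beta$; a branch is a $\subseteq$-maximal chain; $\mathrm{sons}_T(x)$ is the set of immediate successors of $x$; $0_T$ denotes the least node. A foliage tree is a pair $\mathbf{F}=(T,l)$ with $T$ a tree (the skeleton) and $l$ a function on the nodes of $T$; $\mathbf{F}_x:=l(x)$ is the leaf at $x$; tree notions apply to $\mathbf{F}$ via its skeleton; $\mathrm{flesh}\,\mathbf{F}=\bigcup_x\mathbf{F}_x$; $\mathrm{scope}_{\mathbf{F}}(p)=\{x:p\in\mathbf{F}_x\}$. $\mathbf{F}$ is nonincreasing if $y\geq x$ implies $\mathbf{F}_y\subseteq\mathbf{F}_x$.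 $\mathbf{F}$ is locally strict if for every non-maximal node $x$, $\mathbf{F}_x$ is the union of the pairwise disjoint sets $\mathbf{F}_s$, $s\in\mathrm{sons}(x)$; $\mathbf{F}$ has strict branches if it has at least one node and for every branch $B$, $\bigcap_{x\in B}\mathbf{F}_x$ is a singleton; $\mathbf{F}$ is open in $X$ if all leaves are open in $X$; $\mathbf{F}$ is a foliage $\omega,\omega$-tree if its skeleton is order-isomorphic to $({}^{<\omega}\omega,\subsetneq)$. A Baire foliage tree on $X$ is an open in $X$, locally strict foliage $\omega,\omega$-tree with strict branches such that $\mathbf{F}_{0_{\mathbf{F}}}=X$. *)

From HB Require Import structures.
From mathcomp Require Import all_boot all_order.
From mathcomp Require Import boolp classical_sets functions cardinality topology.
Set Implicit Arguments. Unset Strict Implicit. Unset Printing Implicit Defensive.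
Local Open Scope classical_set_scope.
Local Open Scope card_scope.

(* A foliage tree is given by a node type [N], a strict order [lt] on [N]
   (the skeleton) and a leaf function [l : N -> set X]. *)
Section FoliageTrees.
Variables (N : Type) (lt : N -> N -> Prop).

Definition preds (x : N) : set N := [set y | lt y x].

Definition strict_porder : Prop :=
  (forall x, ~ lt x x) /\ (forall x y z, lt x y -> lt y z -> lt x z).

Definition well_ordered_on (S : set N) : Prop :=
  (forall x y, S x -> S y -> x = y \/ lt x y \/ lt y x) /\
  (forall A, A `<=` S -> A !=set0 -> exists m, A m /\ forall y, A y -> y <> m -> lt m y).

Definition is_tree : Prop :=
  strict_porder /\ forall x, well_ordered_on (preds x).

(* height_T(x) = n (a finite ordinal): the predecessors of x form a
   well-ordered set of order type n, i.e. there are exactly n of them *)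
Definition has_height (x : N) (n : nat) : Prop := preds x #= `I_n.

(* height of the tree is omega: the least ordinal not realised as the height
   of a node is omega, i.e. every finite n is realised and every node has a
   finite height (so omega is not realised) *)
Definition tree_height_omega : Prop :=
  (forall n, exists x, has_height x n) /\ (forall x, exists n, has_height x n).

Definition is_least (r : N) : Prop := forall x, x <> r -> lt r x.

Definition is_maximal (x : N) : Prop := ~ exists y, lt x y.

Definition sons (x : N) : set N :=
  [set y | lt x y /\ ~ exists z, lt x z /\ lt z y].

Definition chain (S : set N) : Prop :=
  forall x y, S x -> S y -> x = y \/ lt x y \/ lt y x.

Definition branch (S : set N) : Prop :=
  chain S /\ forall S', chain S' -> S `<=` S' -> S' = S.

(* skeleton order-isomorphic to (^{<omega} omega, strict inclusion) *)
Definition strict_prefix (s t : seq nat) : Prop := prefix s t /\ s <> t.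

Definition omega_omega_tree : Prop :=
  exists f : N -> seq nat, bijective f /\
    forall x y, lt x y <-> strict_prefix (f x) (f y).

Variable (X : Type) (l : N -> set X).

Definition nonincreasing : Prop :=
  forall x y, (lt x y \/ x = y) -> l y `<=` l x.

Definition flesh : set X := \bigcup_(x in [set: N]) l x.

Definition scope (p : X) : set N := [set x | l x p].

Definition locally_strict : Prop :=
  forall x, ~ is_maximal x ->
    l x = \bigcup_(s in sons x) l s /\
    (forall s t, sons x s -> sons x t -> s <> t -> l s `&` l t = set0).

Definition strict_branches : Prop :=
  inhabited N /\
  forall B, branch B -> exists p, \bigcap_(x in B) l x = [set p].

End FoliageTrees.

Definition baire_foliage_tree (X : topologicalType) (N : Type)
    (lt : N -> N -> Prop) (l : N -> set X) : Prop :=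
  [/\ is_tree lt /\ omega_omega_tree lt,
      (forall x, open (l x)),
      locally_strict lt l,
      strict_branches lt l
    & (forall r, is_least lt r -> l r = [set: X])].

From HB Require Import structures.
From mathcomp Require Import all_boot all_order.
From mathcomp Require Import boolp classical_sets functions cardinality topology.
From mathcomp Require Import zify.
Local Open Scope classical_set_scope.
Local Open Scope card_scope.
Set Implicit Arguments. Unset Strict Implicit. Unset Printing Implicit Defensive.

(* Since the skeleton is ω^<ω, the leaves are indexed by finite sequences, L s.
   Local strictness puts every point q in exactly one leaf of each length, and
   these leaves lie along one path mkseq a n with a : ω -> ω; strict branches
   make q |-> a a bijection between X and ω^ω.  Hence a leaf is the complement
   of the union of the other (open) leaves of the same length, so it is clopen,
   and the leaf at s is in bijection with the paths extending s, into which 2^ω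
   injects by grafting the indicator of a set after s. *)

Lemma inj_subset_card_le T U (A : set T) (B : set U) (f : T -> U) :
  {in A &, injective f} -> f @` A `<=` B -> A #<= B.
Proof.
move=> f_inj fAB; have /card_eqPle[_ A_le] := inj_card_eq f_inj.
exact: card_le_trans A_le (subset_card_le fAB).
Qed.

Lemma nth_prefix (T : eqType) (x0 : T) (s t : seq T) i :
  prefix s t -> i < size s -> nth x0 s i = nth x0 t i.
Proof. by move=> /prefixP[u ->] i_lt; rewrite nth_cat i_lt. Qed.

Lemma prefix_mkseq (T : eqType) (a : nat -> T) n m :
  n <= m -> prefix (mkseq a n) (mkseq a m).
Proof. by move=> nm; rewrite prefixE size_mkseq -map_take take_iota (minn_idPl nm). Qed.

Lemma strict_prefix_size s t : strict_prefix s t -> size s < size t.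
Proof.
move=> [st s_neq_t]; rewrite ltn_neqAle size_prefix // andbT.
apply: contra_notN s_neq_t => /eqP eq_size.
by move: st; rewrite prefixE eq_size take_size => /eqP.
Qed.

Section LeafSystem.
Variables (X : Type) (L : seq nat -> set X).
Hypothesis L_rconsP : forall s q, L s q <-> exists k, L (rcons s k) q.
Hypothesis L_rcons_inj :
  forall s k k' q, L (rcons s k) q -> L (rcons s k') q -> k = k'.
Hypothesis L_nil : L [::] = [set: X].

Lemma L_prefix s t : prefix s t -> L t `<=` L s.
Proof.
move=> /prefixP[u ->]; elim/last_ind: u => [|u k IH]; first by rewrite cats0.
by rewrite -rcons_cat => q Lq; apply: IH; apply/L_rconsP; exists k.
Qed.

Lemma L_level n q : exists t, size t = n /\ L t q.
Proof.
elim: n => [|n [t [<- Lt]]]; first by exists [::]; rewrite L_nil.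
have [k Lk] := (L_rconsP t q).1 Lt.
by exists (rcons t k); rewrite size_rcons.
Qed.

Lemma L_size_inj s t q : size s = size t -> L s q -> L t q -> s = t.
Proof.
elim/last_ind: s t => [|s a IH] t; first by move=> /esym/size0nil ->.
case/lastP: t => [|t b]; first by rewrite size_rcons.
rewrite !size_rcons => -[st] Lsa Ltb.
have s_eq_t :=
  IH t st (L_prefix (prefix_rcons s a) Lsa) (L_prefix (prefix_rcons t b) Ltb).
by rewrite -s_eq_t in Ltb *; rewrite (L_rcons_inj Lsa Ltb).
Qed.

Lemma L_chain s t q : size s <= size t -> L s q -> L t q -> prefix s t.
Proof.
move=> st Ls Lt; have Lt' := L_prefix (prefix_take t (size s)) Lt.
by rewrite prefixE; apply/eqP/(L_size_inj _ Lt' Ls); rewrite size_takel.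
Qed.

Lemma L_complement s :
  L s = ~` \bigcup_(t in [set t | size t = size s /\ t <> s]) L t.
Proof.
apply/seteqP; split=> [q Ls [t [st t_neq_s] Lt]|q not_other].
  exact/t_neq_s/(L_size_inj st Lt Ls).
have [t [st Lt]] := L_level (size s) q.
have [<-//|t_neq_s] := eqVneq t s.
by exfalso; apply: not_other; exists t => //; split=> //; apply/eqP.
Qed.

Lemma L_address q : exists a, forall n, L (mkseq a n) q.
Proof.
have lev n : {t | size t = n /\ L t q} := cid (L_level n q).
exists (fun n => nth 0 (sval (lev n.+1)) n) => n.
have [szn Ln] := svalP (lev n).
suff -> : mkseq (fun n => nth 0 (sval (lev n.+1)) n) n = sval (lev n) by [].
apply: (@eq_from_nth _ 0); rewrite size_mkseq ?szn // => i i_lt.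
have [szi Li] := svalP (lev i.+1).
by rewrite nth_mkseq // (nth_prefix _ (L_chain _ Li Ln)) ?szi ?szn.
Qed.

Hypothesis L_path : forall a, exists q, \bigcap_n L (mkseq a n) = [set q].

Definition path_point a := sval (cid (L_path a)).

Lemma path_pointE a : \bigcap_n L (mkseq a n) = [set path_point a].
Proof. exact: svalP (cid (L_path a)). Qed.

Lemma L_path_point a n : L (mkseq a n) (path_point a).
Proof.
by have : [set path_point a] (path_point a) by []; rewrite -path_pointE; apply.
Qed.

Lemma path_point_inj a b : path_point a = path_point b -> a =1 b.
Proof.
move=> e m; have Lb := L_path_point b m.+1; rewrite -e in Lb.
have eq_size : size (mkseq a m.+1) = size (mkseq b m.+1) by rewrite !size_mkseq.
have /(congr1 (nth 0 ^~ m)) := L_size_inj eq_size (L_path_point a m.+1) Lb.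
by rewrite /= !nth_mkseq ?size_mkseq.
Qed.

Lemma L_point_eq q q' : (forall t, L t q -> L t q') -> q' = q.
Proof.
move=> qq'; have [a La] := L_address q.
have on_path x : (forall n, L (mkseq a n) x) -> x = path_point a.
  by move=> Lx; suff : [set path_point a] x by []; rewrite -path_pointE => n _.
by rewrite (on_path q La) (on_path q' (fun n => qq' _ (La n))).
Qed.

Lemma card_L_le s : L s #<= [set: set nat].
Proof.
apply: (@inj_subset_card_le _ _ _ _ (fun q => [set pickle t | t in L^~ q])) => //.
move=> q q' _ _ e; apply/esym/L_point_eq => t Lt.
have : [set pickle t | t in L^~ q'] (pickle t) by rewrite -e; exists t.
by case=> t' Lt' /(pcan_inj pickleK) <-.
Qed.

Definition graft (s : seq nat) (A : set nat) n : nat :=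
  if n < size s then nth 0 s n else `[< A (n - size s) >].

Lemma mkseq_graft s A : mkseq (graft s A) (size s) = s.
Proof.
apply: (@eq_from_nth _ 0); rewrite size_mkseq // => i i_lt.
by rewrite nth_mkseq // /graft i_lt.
Qed.

Lemma graft_inj s A B : graft s A =1 graft s B -> A = B.
Proof.
move=> e; apply/seteqP; split=> m; have := e (m + size s);
  rewrite /graft ltnNge leq_addl /= addnK;
  by case: (asboolP (A m)); case: (asboolP (B m)).
Qed.

Lemma card_L_ge s : [set: set nat] #<= L s.
Proof.
apply: (@inj_subset_card_le _ _ _ _ (fun A => path_point (graft s A))).
  by move=> A B _ _ /path_point_inj /graft_inj.
by move=> _ [A _ <-]; rewrite -{1}(mkseq_graft s A); exact: L_path_point.
Qed.

Lemma card_L s : L s #= [set: set nat].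
Proof. exact: Cantor_Bernstein (card_L_le s) (card_L_ge s). Qed.

End LeafSystem.

Section OmegaOmegaSkeleton.
Variables (N : Type) (lt : N -> N -> Prop).
Variables (f : N -> seq nat) (g : seq nat -> N).
Hypotheses (fK : cancel f g) (gK : cancel g f).
Hypothesis ltE : forall x y, lt x y <-> strict_prefix (f x) (f y).

Lemma lt_size x y : lt x y -> size (f x) < size (f y).
Proof. by move=> /ltE /strict_prefix_size. Qed.

Lemma sons_rcons s k : sons lt (g s) (g (rcons s k)).
Proof.
split.
  apply/ltE; rewrite !gK; split; first exact: prefix_rcons.
  by move=> /(congr1 size); rewrite size_rcons; lia.
by move=> [z [/lt_size + /lt_size]]; rewrite !gK size_rcons; lia.
Qed.

Lemma sonsP s y : sons lt (g s) y -> exists k, f y = rcons s k.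
Proof.
move=> [/ltE]; rewrite gK => -[/prefixP[u fy] s_neq] no_between.
case: u fy s_neq => [|a [|b u]] fy s_neq.
- by case: s_neq; rewrite fy cats0.
- by exists a; rewrite fy cats1.
- exfalso; apply: no_between; exists (g (rcons s a)).
  split; apply/ltE; rewrite !gK; split.
  + exact: prefix_rcons.
  + by move=> /(congr1 size); rewrite size_rcons; lia.
  + by rewrite fy -cats1 -[[:: a, b & u]]/([:: a] ++ b :: u) catA prefix_prefix.
  + by move=> /(congr1 size); rewrite fy size_rcons size_cat /=; lia.
Qed.

Lemma not_maximal x : ~ is_maximal lt x.
Proof.
by apply; exists (g (rcons (f x) 0)); have [] := sons_rcons (f x) 0; rewrite fK.
Qed.

Lemma least_nil : is_least lt (g [::]).
Proof.
move=> x x_neq; apply/ltE; rewrite gK; split; first exact: prefix0s.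
by move=> nil_eq; apply: x_neq; rewrite nil_eq fK.
Qed.

Lemma has_height_size x : has_height lt x (size (f x)).
Proof.
rewrite /has_height.
have -> : preds lt x = (fun k => g (take k (f x))) @` `I_(size (f x)).
  apply/seteqP; split=> [y /ltE yx|_ [k k_lt <-]].
    exists (size (f y)); first exact: strict_prefix_size.
    by case: yx; rewrite prefixE => /eqP -> _; rewrite fK.
  apply/ltE; rewrite gK; split; first exact: prefix_take.
  by move=> /(congr1 size); rewrite size_takel ?k_lt //; move: k_lt => /=; lia.
apply: inj_card_eq => i j /= i_lt j_lt /(congr1 (size \o f)) /=.
by rewrite !gK !size_takel //; [move: j_lt | move: i_lt]; rewrite inE /=; lia.
Qed.

Lemma has_height_eq_size x n : has_height lt x n -> n = size (f x).
Proof.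
by move=> hx; apply/card_eq_II/(card_eq_trans (card_esym hx) (has_height_size x)).
Qed.

Lemma tree_height_omega_of_iso : tree_height_omega lt.
Proof.
split=> [n|x]; last by exists (size (f x)); exact: has_height_size.
by exists (g (nseq n 0)); have := has_height_size (g (nseq n 0)); rewrite gK size_nseq.
Qed.

Lemma branch_levels S :
  (forall x y, S x -> S y -> prefix (f x) (f y) \/ prefix (f y) (f x)) ->
  (forall n, exists2 x, S x & size (f x) = n) -> branch lt S.
Proof.
move=> S_prefix S_level.
have lt_or_eq x y : prefix (f x) (f y) -> x = y \/ lt x y.
  have [/(can_inj fK) ->|fx_neq] := eqVneq (f x) (f y); first by left.
  by move=> xy; right; apply/ltE; split=> //; exact/eqP.
have S_chain : chain lt S.
  move=> x y Sx Sy; case: (S_prefix x y Sx Sy) => [/lt_or_eq|/lt_or_eq]; first by tauto.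
  by case=> [->|]; tauto.
split=> // S' S'_chain SS'; apply/seteqP; split=> // y S'y.
have [z Sz sz] := S_level (size (f y)).
by case: (S'_chain y z S'y (SS' _ Sz)) => [->//|[/lt_size|/lt_size]]; rewrite sz ltnn.
Qed.

End OmegaOmegaSkeleton.

Section BaireLeaves.
Variables (X : topologicalType) (N : Type) (lt : N -> N -> Prop) (l : N -> set X).
Variables (f : N -> seq nat) (g : seq nat -> N).
Hypotheses (fK : cancel f g) (gK : cancel g f).
Hypothesis ltE : forall x y, lt x y <-> strict_prefix (f x) (f y).
Hypotheses (l_strict : locally_strict lt l) (l_branches : strict_branches lt l).
Hypothesis l_root : forall r, is_least lt r -> l r = [set: X].

Let L s := l (g s).

Let lE x : l x = L (f x).
Proof. by rewrite /L fK. Qed.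

Let L_rconsP s q : L s q <-> exists k, L (rcons s k) q.
Proof.
rewrite /L; have [-> _] := l_strict (not_maximal fK gK ltE (x := g s)); split.
  by move=> [y /(sonsP gK ltE) [k fy] ly]; exists k; rewrite -fy fK.
by move=> [k Lk]; exists (g (rcons s k)) => //; exact: sons_rcons.
Qed.

Let L_rcons_inj s k k' q : L (rcons s k) q -> L (rcons s k') q -> k = k'.
Proof.
move=> Lk Lk'; apply: contrapT => k_neq.
have g_neq : g (rcons s k) <> g (rcons s k').
  by move=> /(congr1 (last 0 \o f)) /=; rewrite !gK !last_rcons.
have [_ disj] := l_strict (not_maximal fK gK ltE (x := g s)).
have := disj _ _ (sons_rcons gK ltE s k) (sons_rcons gK ltE s k') g_neq.
by move=> disj_k; suff : set0 q by []; rewrite -disj_k.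
Qed.

Let L_nil : L [::] = [set: X].
Proof. exact: l_root (least_nil fK gK ltE). Qed.

Let L_path a : exists q, \bigcap_n L (mkseq a n) = [set q].
Proof.
pose B := [set x | exists n, f x = mkseq a n].
have B_branch : branch lt B.
  apply: (branch_levels fK ltE) => [x y [n ->] [m ->]|m].
    by case: (leqP n m) => [|/ltnW] nm; [left|right]; exact: prefix_mkseq.
  by exists (g (mkseq a m)); [exists m|]; rewrite gK ?size_mkseq.
have [q Bq] := l_branches.2 B B_branch; exists q; rewrite -Bq.
apply/seteqP; split=> [z Lz x [n fx]|z Bz n _]; first by rewrite lE fx; exact: Lz.
by apply: Bz; exists n; rewrite gK.
Qed.

Lemma leaf_nonincreasing : nonincreasing lt l.
Proof. by move=> x y [/ltE[xy _]|->] //; rewrite !lE; exact: L_prefix. Qed.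

Lemma scope_branch q : branch lt (scope l q).
Proof.
apply: (branch_levels fK ltE) => [x y|n]; rewrite /scope /= ?lE.
  move=> Lx Ly; case: (leqP (size (f x)) (size (f y))) => [|/ltnW] xy;
    by [left; exact: (L_chain L_rconsP L_rcons_inj xy Lx Ly)
       |right; exact: (L_chain L_rconsP L_rcons_inj xy Ly Lx)].
have [t [st Lt]] := L_level L_rconsP L_nil n q.
by exists (g t); rewrite /scope /= ?lE gK.
Qed.

Lemma scope_height_unique q n : exists! v, scope l q v /\ has_height lt v n.
Proof.
have [t [st Lt]] := L_level L_rconsP L_nil n q.
exists (g t); split.
  by split; [|rewrite -st -{2}(gK t); exact: (has_height_size fK gK ltE)].
move=> v [lv /(has_height_eq_size fK gK ltE) hv]; apply: (can_inj fK); rewrite gK.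
by apply: (L_size_inj L_rconsP L_rcons_inj _ Lt); rewrite -?lE // st hv.
Qed.

Lemma leaf_closed : (forall x, open (l x)) -> forall v, closed (l v).
Proof.
move=> l_open v; rewrite lE (L_complement L_rconsP L_rcons_inj L_nil) closedC.
by apply: bigcup_open => t _; exact: l_open.
Qed.

Lemma leaf_card v : l v #= [set: set nat].
Proof. by rewrite lE; exact: (card_L L_rconsP L_rcons_inj L_nil L_path). Qed.

End BaireLeaves.

Theorem corollary5 (X : topologicalType) (N : Type) (lt : N -> N -> Prop)
    (l : N -> set X) (p : X) :
  baire_foliage_tree lt l ->
  [/\ (* (a) *)
      nonincreasing lt l /\
      (forall r, is_least lt r -> flesh l = l r) /\
      tree_height_omega lt,
      (* (b) *)
      (forall v, open (l v) /\ closed (l v) /\ l v #= [set: set nat]),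
      (* (c) *)
      branch lt (scope l p)
    & (* (d) *)
      (forall n : nat, exists! v, scope l p v /\ has_height lt v n)].
Proof.
move=> [[_ [f [[g fK gK] ltE]]] l_open l_strict l_branches l_root].
split.
- split; first exact: (leaf_nonincreasing fK gK ltE l_strict).
  split; last exact: (tree_height_omega_of_iso fK gK ltE).
  move=> r /l_root lr; rewrite lr; apply/seteqP; split=> // q _.
  by exists r; rewrite ?lr.
- move=> v; split; first exact: l_open.
  split; first exact: (leaf_closed fK gK ltE l_strict l_root).
  exact: (leaf_card fK gK ltE l_strict l_branches l_root).
- exact: (scope_branch fK gK ltE l_strict l_root).
- exact: (scope_height_unique fK gK ltE l_strict l_root).
Qed.
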